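(* Let $\rho>0$ and let $y\in\mathbb{R}^n$ satisfy $y_1\ge y_2\ge\cdots\ge y_n$. Then \[ S_\rho(y)=\Pi_{\mathcal D}(y-\rho w), \] where $w\in\mathbb{R}^n$ is given by $w_k=n-2k+1$, $k=1,\dots,n$.
   Context: For $\rho>0$ and $y\in\mathbb{R}^n$, $S_\rho(y):=\operatorname{argmin}_{x\in\mathbb{R}^n}\big\{\tfrac12\|x-y\|^2+\rho\sum_{1\le i<j\le n}|x_i-x_j|\big\}$ (unique minimizer). $\mathcal D:=\{x\in\mathbb{R}^n : x_1\ge x_2\ge\cdots\ge x_n\}$, and $\Pi_{\mathcal D}$ denotes the Euclidean (metric) projection onto $\mathcal D$. *)

From HB Require Import structures.
From mathcomp Require Import all_boot all_order all_algebra.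
Set Implicit Arguments. Unset Strict Implicit. Unset Printing Implicit Defensive.
Import Order.TTheory GRing.Theory Num.Theory.
Local Open Scope ring_scope.

Section Defs.
Variables (R : realFieldType) (n : nat).

Definition sqnorm (x : 'rV[R]_n) : R := \sum_(i < n) (x ord0 i) ^+ 2.

Definition prox_obj (rho : R) (y x : 'rV[R]_n) : R :=
  sqnorm (x - y) / 2%:R
  + rho * \sum_(i < n) \sum_(j < n | (i < j)%N) `|x ord0 i - x ord0 j|.

Definition is_S (rho : R) (y x : 'rV[R]_n) : Prop :=
  forall z : 'rV[R]_n, prox_obj rho y x <= prox_obj rho y z.

Definition inD (x : 'rV[R]_n) : Prop :=
  forall i j : 'I_n, (i <= j)%N -> x ord0 j <= x ord0 i.

Definition is_proj_D (v x : 'rV[R]_n) : Prop :=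
  inD x /\ forall z : 'rV[R]_n, inD z -> sqnorm (x - v) <= sqnorm (z - v).

(* w_k = n - 2k + 1 for k = 1..n; 0-based index i corresponds to k = i+1 *)
Definition wvec : 'rV[R]_n :=
  \row_(i < n) (n%:R - 2%:R * (i.+1)%:R + 1).

End Defs.

From HB Require Import structures.
From mathcomp Require Import all_boot all_order all_algebra.
From mathcomp Require Import fingroup perm ring lra.
Import Order.TTheory GRing.Theory Num.Theory.
Local Open Scope ring_scope.

(* On the cone D the penalty is linear: for decreasing x,
   sum_(i<j) |x_i - x_j| = <w, x>.  Hence on D the objective differs from
   1/2 ||x - (y - rho w)||^2 by a constant, and minimizing it over D is the
   projection.  For decreasing y the minimization may be restricted to D:
   transposing an inversion x_i < x_j (i < j) keeps the penalty and does not
   increase ||x - y|| (rearrangement inequality), so sorting never increases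
   the objective; and a minimizer with an inversion would be beaten, by strict
   convexity, by the midpoint of itself and its transposition. *)

Lemma sum_ltn_pairs_subr (R : comPzRingType) (f : nat -> R) m :
  \sum_(i < m) \sum_(j < m | (i < j)%N) (f i - f j) =
  \sum_(k < m) (m%:R - 2%:R * k.+1%:R + 1) * f k.
Proof.
elim: m => [|m IHm]; first by rewrite !big_ord0.
have last0 : \sum_(j < m.+1 | (m < j)%N) (f m - f j) = 0.
  by apply: big_pred0 => j; rewrite ltnNge -ltnS ltn_ord.
rewrite big_ord_recr /= last0 addr0.
rewrite (eq_bigr (fun i : 'I_m =>
    \sum_(j < m | (i < j)%N) (f i - f j) + (f i - f m))); last first.
  by move=> i _; rewrite big_mkcond big_ord_recr /= ltn_ord -big_mkcond.
rewrite big_split /= IHm [in RHS]big_ord_recr /=.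
rewrite [in RHS](eq_bigr (fun k : 'I_m =>
    (m%:R - 2%:R * k.+1%:R + 1) * f k + f k)); last first.
  by move=> k _; rewrite -[m.+1]addn1 natrD; ring.
rewrite [in RHS]big_split /= sumrB sumr_const card_ord mulr_natl.
rewrite -[m.+1]addn1 !natrD; ring.
Qed.

Lemma sum_tperm {T : finType} {R : comPzRingType} (i j : T) (h : T -> T -> R) :
  i != j ->
  \sum_k h k (tperm i j k) = \sum_k h k k + (h i j + h j i - h i i - h j j).
Proof.
move=> nij.
rewrite (bigD1 i) //= (bigD1 j) 1?eq_sym //= [in RHS](bigD1 i) //=.
rewrite [in RHS](bigD1 j) 1?eq_sym //= tpermL tpermR.
rewrite (eq_bigr (fun k => h k k)); last first.
  by move=> k /andP[ki kj]; rewrite tpermD // eq_sym.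
ring.
Qed.

Section ProxObjective.
Context {R : realFieldType} {n : nat}.
Implicit Types (u v x y z : 'rV[R]_n).

Definition penalty u :=
  \sum_(i < n) \sum_(j < n | (i < j)%N) `|u ord0 i - u ord0 j|.

Lemma prox_objE rho y x :
  prox_obj rho y x = sqnorm (x - y) / 2%:R + rho * penalty x.
Proof. by []. Qed.

Lemma penalty_mul2 u :
  penalty u *+ 2 = \sum_(i < n) \sum_(j < n) `|u ord0 i - u ord0 j|.
Proof.
rewrite (eq_bigr (fun i : 'I_n =>
    \sum_(j < n) (if (i < j)%N then `|u ord0 i - u ord0 j| else 0) +
    \sum_(j < n) (if (j < i)%N then `|u ord0 j - u ord0 i| else 0))); last first.
  move=> i _; rewrite -big_split; apply: eq_bigr => j _ /=.
  case: ltngtP => [_|_|/val_inj ->]; first by rewrite addr0.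
    by rewrite add0r distrC.
  by rewrite subrr normr0 addr0.
rewrite big_split /= [X in _ = _ + X]exchange_big mulr2n.
by congr (_ + _); apply: eq_bigr => i _; rewrite big_mkcond.
Qed.

Lemma penalty_col_perm (s : 'S_n) u : penalty (col_perm s u) = penalty u.
Proof.
apply: (@pmulrnI _ 2) => //; rewrite !penalty_mul2.
rewrite [in RHS](reindex_inj (@perm_inj _ s)) /=; apply: eq_bigr => i _.
rewrite [in RHS](reindex_inj (@perm_inj _ s)) /=.
by apply: eq_bigr => j _; rewrite !mxE.
Qed.

Lemma penalty_midpoint u v :
  penalty (2%:R^-1 *: (u + v)) <= (penalty u + penalty v) / 2%:R.
Proof.
rewrite /penalty mulrDl !mulr_suml -big_split /=; apply: ler_sum => i _.
rewrite !mulr_suml -big_split /=; apply: ler_sum => j _.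
rewrite !mxE -mulrDl.
have -> : 2%:R^-1 * (u ord0 i + v ord0 i) - 2%:R^-1 * (u ord0 j + v ord0 j)
          = (u ord0 i - u ord0 j + (v ord0 i - v ord0 j)) / 2%:R by ring.
rewrite normrM normfV normr_nat ler_pM2r ?invr_gt0 //; exact: ler_normD.
Qed.

Definition wdot u := \sum_(k < n) wvec R n ord0 k * u ord0 k.

Lemma penalty_inD u : inD u -> penalty u = wdot u.
Proof.
move=> Du.
pose f k := if insub k is Some l then u ord0 l else 0.
have fE (i : 'I_n) : f i = u ord0 i by rewrite /f valK.
rewrite /penalty (eq_bigr (fun i : 'I_n =>
    \sum_(j < n | (i < j)%N) (f i - f j))); last first.
  move=> i _; apply: eq_bigr => j ij.
  by rewrite !fE ger0_norm // subr_ge0 Du // ltnW.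
by rewrite sum_ltn_pairs_subr; apply: eq_bigr => k _; rewrite mxE fE.
Qed.

Lemma inD_no_inversion x :
  (forall i j : 'I_n, (i < j)%N -> ~ x ord0 i < x ord0 j) -> inD x.
Proof.
move=> no_inv i j; rewrite leq_eqVlt => /predU1P[/val_inj -> // | ij].
by rewrite leNgt; apply/negP; apply: no_inv.
Qed.

Lemma sqnorm_coord_le u i : u ord0 i ^+ 2 <= sqnorm u.
Proof. by rewrite /sqnorm (bigD1 i) //= lerDl sumr_ge0 // => k _; apply: sqr_ge0. Qed.

Lemma sqnorm_midpoint u v y : sqnorm (2%:R^-1 *: (u + v) - y) =
  (sqnorm (u - y) + sqnorm (v - y)) / 2%:R - sqnorm (u - v) / 4%:R.
Proof.
rewrite /sqnorm mulrDl !mulr_suml -big_split -sumrB /=; apply: eq_bigr => k _.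
by rewrite !mxE; field; rewrite ?pnatr_eq0.
Qed.

Lemma sqnorm_col_tperm (i j : 'I_n) u y : i != j ->
  sqnorm (col_perm (tperm i j) u - y) =
  sqnorm (u - y) + 2%:R * ((u ord0 j - u ord0 i) * (y ord0 j - y ord0 i)).
Proof.
move=> nij; rewrite /sqnorm.
rewrite (eq_bigr (fun k => (u ord0 (tperm i j k) - y ord0 k) ^+ 2)); last first.
  by move=> k _; rewrite !mxE.
rewrite (sum_tperm i j (fun k l => (u ord0 l - y ord0 k) ^+ 2)) //.
rewrite (eq_bigr (fun k => (u - y) ord0 k ^+ 2)); last by move=> k _; rewrite !mxE.
congr (_ + _); ring.
Qed.

Lemma sqnorm_sub_shift rho y u : sqnorm (u - (y - rho *: wvec R n)) =
  sqnorm (u - y) + 2%:R * rho * wdot u +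
  \sum_(k < n) (rho ^+ 2 * wvec R n ord0 k ^+ 2
                - 2%:R * rho * wvec R n ord0 k * y ord0 k).
Proof.
rewrite /sqnorm /wdot mulr_sumr -!big_split /=; apply: eq_bigr => k _.
by rewrite !mxE; ring.
Qed.

Lemma prox_obj_inD_subE rho y {u v} : inD u -> inD v ->
  prox_obj rho y u - prox_obj rho y v =
  (sqnorm (u - (y - rho *: wvec R n)) - sqnorm (v - (y - rho *: wvec R n)))
  / 2%:R.
Proof.
by move=> Du Dv; rewrite !prox_objE !penalty_inD // !sqnorm_sub_shift; field.
Qed.

Lemma prox_obj_sort_pair_le rho {y u} {i j : 'I_n} :
  inD y -> (i < j)%N -> u ord0 i < u ord0 j ->
  prox_obj rho y (col_perm (tperm i j) u) <= prox_obj rho y u.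
Proof.
move=> Dy ij uij; have nij : i != j by rewrite -val_eqE neq_ltn ij.
have yji : y ord0 j - y ord0 i <= 0 by rewrite subr_le0 Dy // ltnW.
have uji : 0 <= u ord0 j - u ord0 i by rewrite subr_ge0 ltW.
rewrite !prox_objE penalty_col_perm sqnorm_col_tperm // lerD2r.
by rewrite ler_wpM2r ?invr_ge0 // gerDl pmulr_rle0 // mulr_ge0_le0.
Qed.

Lemma minimizer_inD {rho y x} : 0 <= rho -> inD y -> is_S rho y x -> inD x.
Proof.
move=> rho_ge0 Dy Sx; apply: inD_no_inversion => i j ij xij.
set x' := col_perm (tperm i j) x.
have le_x'x := prox_obj_sort_pair_le rho Dy ij xij.
have dist_gt0 : 0 < sqnorm (x - x').
  apply: lt_le_trans (sqnorm_coord_le _ i).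
  by rewrite !mxE tpermL exprn_even_gt0 //= subr_eq0 lt_eqF.
have pen_mid : rho * penalty (2%:R^-1 *: (x + x'))
               <= rho * ((penalty x + penalty x') / 2%:R).
  by rewrite ler_wpM2l // penalty_midpoint.
have := Sx (2%:R^-1 *: (x + x')).
move: le_x'x pen_mid; rewrite -/x' !prox_objE sqnorm_midpoint penalty_col_perm.
lra.
Qed.

Lemma exists_inD_prox_obj_le rho {y} z : inD y ->
  exists2 z', inD z' & prox_obj rho y z' <= prox_obj rho y z.
Proof.
move=> Dy.
pose improves (s : 'S_n) := prox_obj rho y (col_perm s z) <= prox_obj rho y z.
have improves1 : improves 1%g by rewrite /improves col_perm1.
(* among the improving permutations, a maximizer of this weight has no inversion *)
pose weight (s : 'S_n) := \sum_(k < n) - k%:R * col_perm s z ord0 k.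
have [s improves_s s_max] := @arg_maxP _ _ _ 1%g improves weight improves1.
exists (col_perm s z) => //; apply: inD_no_inversion => i j ij zij.
have nij : i != j by rewrite -val_eqE neq_ltn ij.
have swapE : col_perm (tperm i j * s) z = col_perm (tperm i j) (col_perm s z).
  by rewrite col_permM.
have improves_swap : improves (tperm i j * s)%g.
  by rewrite /improves swapE (le_trans (prox_obj_sort_pair_le rho Dy ij zij)).
have : weight (tperm i j * s)%g <= weight s := s_max _ improves_swap.
rewrite /weight swapE; move: zij; set v := col_perm s z => vij.
rewrite (eq_bigr (fun k : 'I_n => - k%:R * v ord0 (tperm i j k)));
  last by move=> k _; rewrite mxE.
rewrite (sum_tperm i j (fun (k l : 'I_n) => - k%:R * v ord0 l)) //.
have : 0 < (j%:R - i%:R) * (v ord0 j - v ord0 i).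
  by rewrite mulr_gt0 // subr_gt0 // ltr_nat.
lra.
Qed.

End ProxObjective.

Theorem proposition2p2 (R : realFieldType) (n : nat) (rho : R) (y : 'rV[R]_n) :
  0 < rho -> inD y ->
  forall x : 'rV[R]_n, is_S rho y x <-> is_proj_D (y - rho *: wvec R n) x.
Proof.
move=> rho_gt0 Dy x; split.
  move=> Sx; have Dx := minimizer_inD (ltW rho_gt0) Dy Sx.
  split=> // z Dz; have := Sx z; have := prox_obj_inD_subE rho y Dx Dz; lra.
case=> Dx projx z.
have [z' Dz' le_z'z] := exists_inD_prox_obj_le rho z Dy.
apply: le_trans le_z'z.
have := projx z' Dz'; have := prox_obj_inD_subE rho y Dx Dz'; lra.
Qed.
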